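(* The class of context-free languages is not closed under ${\rm bdi}$; for instance, for $L=\{0^m1^m2^{2n}3^{4n}:m,n\ge1\}$ one has ${\rm bdi}(L)\cap(03)^+(13)^+(23)^+=\{(03)^n(13)^n(23)^{2n}:n\ge1\}$, so ${\rm bdi}(L)$ is not context-free.
   Context: For a word $w=a_1\cdots a_n$, ${\rm fh}(w)=a_1\cdots a_{\lfloor n/2\rfloor}$ and ${\rm lh}(w)=a_{\lfloor n/2\rfloor+1}\cdots a_n$. For words $x=a_1\cdots a_m$ and $y=b_1\cdots b_m$ the perfect shuffle is $x\,\text{sh}\,y=a_1b_1\cdots a_mb_m$, and if $y=b_1\cdots b_{m+1}$ has length $m+1$ then $x\,\text{sh}\,y=a_1b_1\cdots a_mb_mb_{m+1}$. ${\rm bdi}(w)={\rm fh}(w)\,\text{sh}\,{\rm lh}(w)$ and ${\rm bdi}(L)=\{{\rm bdi}(w):w\in L\}$. *)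

From Stdlib Require List.
From mathcomp Require Import all_boot.
Set Implicit Arguments. Unset Strict Implicit. Unset Printing Implicit Defensive.

Definition language (T : Type) := seq T -> Prop.

(* Nonterminals are natural numbers; a grammar has a start symbol and a
   finite list of productions A -> rhs, rhs a word over nonterminals
   (inl) and terminals (inr). *)
Record cfg (T : Type) := CFG {
  cfg_start : nat;
  cfg_rules : seq (nat * seq (nat + T))
}.

Inductive cfg_step (T : Type) (G : cfg T) : seq (nat + T) -> seq (nat + T) -> Prop :=
| CfgStep (u v : seq (nat + T)) (A : nat) (rhs : seq (nat + T)) :
    List.In (A, rhs) (cfg_rules G) ->
    cfg_step G (u ++ inl A :: v) (u ++ rhs ++ v).

Inductive cfg_derives (T : Type) (G : cfg T) : seq (nat + T) -> seq (nat + T) -> Prop :=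
| CfgRefl s : cfg_derives G s s
| CfgTrans s1 s2 s3 : cfg_step G s1 s2 -> cfg_derives G s2 s3 -> cfg_derives G s1 s3.

Definition cfg_lang (T : Type) (G : cfg T) : language T :=
  fun w => cfg_derives G [:: inl (cfg_start G)] (map inr w).

Definition context_free (T : Type) (L : language T) : Prop :=
  exists G : cfg T, forall w, L w <-> cfg_lang G w.

Definition fh (T : Type) (w : seq T) : seq T := take (size w)./2 w.
Definition lh (T : Type) (w : seq T) : seq T := drop (size w)./2 w.

Fixpoint sh (T : Type) (x y : seq T) : seq T :=
  match x, y with
  | a :: x', b :: y' => a :: b :: sh x' y'
  | [::], _ => y
  | _, [::] => x
  end.

Definition bdi (T : Type) (w : seq T) : seq T := sh (fh w) (lh w).

Definition bdi_lang (T : Type) (L : language T) : language T :=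
  fun w => exists v, L v /\ w = bdi v.

Definition L14 : language nat :=
  fun w => exists m n, 1 <= m /\ 1 <= n /\
    w = nseq m 0 ++ nseq m 1 ++ nseq (2 * n) 2 ++ nseq (4 * n) 3.

Definition wpow (T : Type) (x : seq T) (k : nat) : seq T := flatten (nseq k x).

Definition R14 : language nat :=
  fun w => exists a b c, 1 <= a /\ 1 <= b /\ 1 <= c /\
    w = wpow [:: 0; 3] a ++ wpow [:: 1; 3] b ++ wpow [:: 2; 3] c.

Definition K14 : language nat :=
  fun w => exists n, 1 <= n /\
    w = wpow [:: 0; 3] n ++ wpow [:: 1; 3] n ++ wpow [:: 2; 3] (2 * n).

From mathcomp Require Import all_boot zify.
Set Implicit Arguments. Unset Strict Implicit. Unset Printing Implicit Defensive.

(* Next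
   come the two facts about bdi that matter: it permutes letters (so the
   letter counts of L survive), and the second letter of bdi(w) is the
   middle letter of w.  These invariants of bdi(L) determine bdi(L) ∩ R, and
   they are violated by pumping (03)^q (13)^q (23)^(2q) for large q. *)

Section Derivations.
Variables (T : Type) (G : cfg T).
Local Notation rules := (cfg_rules G).

(* [yields ss w k]: the sentential form [ss] derives the terminal word [w] by a
   derivation tree with [k] internal nodes.  Unlike [cfg_derives], this
   relation is structural, so that subtrees can be cut out and regrafted. *)
Inductive yields : seq (nat + T) -> seq T -> nat -> Prop :=
| YieldsNil : yields [::] [::] 0
| YieldsTerm a ss w k : yields ss w k -> yields (inr a :: ss) (a :: w) k
| YieldsRule A rhs ss w1 w2 k1 k2 : List.In (A, rhs) rules ->
    yields rhs w1 k1 -> yields ss w2 k2 -> yields (inl A :: ss) (w1 ++ w2) (k1 + k2).+1.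

Lemma yields_eq ss w k w' k' : yields ss w k -> w = w' -> k = k' -> yields ss w' k'.
Proof. by move=> H <- <-. Qed.

Lemma derives_trans s1 s2 s3 :
  cfg_derives G s1 s2 -> cfg_derives G s2 s3 -> cfg_derives G s1 s3.
Proof. by elim=> [//|a b c Hab _ IH] H; apply: CfgTrans Hab (IH H). Qed.

Lemma derives_ctx u v s1 s2 :
  cfg_derives G s1 s2 -> cfg_derives G (u ++ s1 ++ v) (u ++ s2 ++ v).
Proof.
elim=> [s|a b c [u0 v0 A rhs Hin] _ IH]; first exact: CfgRefl.
apply: CfgTrans IH; have := @CfgStep _ G (u ++ u0) (v0 ++ v) A rhs Hin.
by rewrite -!catA.
Qed.

Lemma yields_sound ss w k : yields ss w k -> cfg_derives G ss (map inr w).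
Proof.
elim=> [|a ss0 w0 k0 _ IH|A rhs ss0 w1 w2 k1 k2 Hin _ IH1 _ IH2].
- exact: CfgRefl.
- by have := derives_ctx [:: inr a] [::] IH; rewrite !cats0.
- apply: (@CfgTrans _ _ _ (rhs ++ ss0)); first exact: (@CfgStep _ G [::]).
  apply: (@derives_trans _ (map inr w1 ++ ss0)); first by have := derives_ctx [::] ss0 IH1.
  by have := derives_ctx (map inr w1) [::] IH2; rewrite !cats0 map_cat.
Qed.

Lemma yields_nil_inv w k : yields [::] w k -> w = [::] /\ k = 0.
Proof. by move=> H; inversion H. Qed.

Lemma yields_term_inv a ss w k :
  yields (inr a :: ss) w k -> exists2 w', w = a :: w' & yields ss w' k.
Proof. by move=> H; inversion H; subst; exists w0. Qed.

Lemma yields_rule_inv A ss w k : yields (inl A :: ss) w k ->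
  exists rhs w1 w2 k1 k2, [/\ List.In (A, rhs) rules, yields rhs w1 k1,
    yields ss w2 k2, w = w1 ++ w2 & k = (k1 + k2).+1].
Proof. by move=> H; inversion H; subst; exists rhs, w1, w2, k1, k2. Qed.

Lemma yields_cat s1 s2 w k : yields (s1 ++ s2) w k <->
  exists w1 w2 k1 k2, [/\ w = w1 ++ w2, k = k1 + k2, yields s1 w1 k1 & yields s2 w2 k2].
Proof.
split.
- elim: s1 w k => [|[A|a] s1 IH] w k /= H.
  + by exists [::], w, 0, k; split=> //; exact: YieldsNil.
  + have [rhs [w1 [w2 [k1 [k2 [Hin H1 /IH [u1 [u2 [l1 [l2 [-> -> Ha Hb]]]]] -> ->]]]]]] :=
      yields_rule_inv H.
    exists (w1 ++ u1), u2, (k1 + l1).+1, l2.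
    by split=> //; [rewrite catA | lia | exact: YieldsRule Hin H1 Ha].
  + have [w' -> /IH [u1 [u2 [l1 [l2 [-> -> Ha Hb]]]]]] := yields_term_inv H.
    by exists (a :: u1), u2, l1, l2; split=> //; exact: YieldsTerm.
- move=> [w1 [w2 [k1 [k2 [-> -> Ha Hb]]]]].
  elim: Ha => [|x ss w0 k0 _ IH|A rhs ss u1 u2 l1 l2 Hin H1 _ _ IH] //=.
  + exact: YieldsTerm.
  + by apply: yields_eq (YieldsRule Hin H1 IH) _ _; [rewrite catA | lia].
Qed.

Lemma yields_app s1 s2 w1 w2 k1 k2 :
  yields s1 w1 k1 -> yields s2 w2 k2 -> yields (s1 ++ s2) (w1 ++ w2) (k1 + k2).
Proof. by move=> H1 H2; apply/yields_cat; exists w1, w2, k1, k2. Qed.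

Lemma yields_terminals w : yields (map inr w) w 0.
Proof. by elim: w => [|a w IH] /=; [exact: YieldsNil | exact: YieldsTerm]. Qed.

Lemma yields_complete ss w : cfg_derives G ss (map inr w) -> exists k, yields ss w k.
Proof.
move E : (map inr w) => s' H; elim: H w E => [s|s1 s2 s3 [u v A rhs Hin] _ IH] w E.
  by subst; exists 0; exact: yields_terminals.
have [k /yields_cat [w1 [w23 [k1 [k23 [-> _ Hu /yields_cat H23]]]]]] := IH w E.
have [w2 [w3 [k2 [k3 [-> _ Hr Hv]]]]] := H23.
exists (k1 + (k2 + k3).+1); apply: yields_app Hu _.
exact: YieldsRule Hin Hr Hv.
Qed.

Lemma yields_single A rhs w k :
  List.In (A, rhs) rules -> yields rhs w k -> yields [:: inl A] w k.+1.
Proof. by move=> Hin H; apply: yields_eq (YieldsRule Hin H YieldsNil) _ _; rewrite ?cats0 ?addn0. Qed.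

Lemma yields_single_inv A w k : yields [:: inl A] w k ->
  exists rhs k', [/\ k = k'.+1, List.In (A, rhs) rules & yields rhs w k'].
Proof.
case/yields_rule_inv => rhs [w1 [w2 [k1 [k2 [Hin H1 /yields_nil_inv [-> ->] -> ->]]]]].
by exists rhs, k1; rewrite cats0 addn0.
Qed.

Lemma cfg_lang_yields w :
  cfg_lang G w <-> exists k, yields [:: inl (cfg_start G)] w k.
Proof. by split=> [/yields_complete // | [k /yields_sound]]. Qed.

Lemma yields_prefix_inv s ss w k :
  yields (map inr s ++ ss) w k -> exists2 w', w = s ++ w' & yields ss w' k.
Proof.
elim: s w => [|a s IH] w /=; first by exists w.
move=> H; have [w' -> /IH [w'' -> H']] := yields_term_inv H.
by exists w''.
Qed.

Lemma yields_terminals_inv s w k : yields (map inr s) w k -> w = s.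
Proof.
rewrite -[map inr s]cats0 => /yields_prefix_inv [w' ->] /yields_nil_inv [-> _].
exact: cats0.
Qed.

End Derivations.

Section Subtrees.
Variables (T : Type) (G : cfg T).
Local Notation rules := (cfg_rules G).
Local Notation yields := (yields G).

(* [has_subtree ss w k A x kx]: the derivation [yields ss w k] contains a subtree
   in which [A] derives [x] in [kx] steps, and the surrounding context
   [u _ z] (of [c] steps) accepts any other derivation of [A] in its place. *)
Definition has_subtree ss w k A x kx :=
  yields [:: inl A] x kx /\ exists u z c, [/\ w = u ++ x ++ z, k = c + kx &
    forall x' kx', yields [:: inl A] x' kx' -> yields ss (u ++ x' ++ z) (c + kx')].

Lemma subtree_root A rhs ss w1 w2 k1 k2 : List.In (A, rhs) rules ->
  yields rhs w1 k1 -> yields ss w2 k2 ->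
  has_subtree (inl A :: ss) (w1 ++ w2) (k1 + k2).+1 A w1 k1.+1.
Proof.
move=> Hin H1 H2; split; first exact: yields_single H1.
exists [::], w2, k2; split=> [//|| x' kx' /yields_single_inv [rhs' [k' [-> Hin' H']]]]; first lia.
by apply: yields_eq (YieldsRule Hin' H' H2) _ _ => //; lia.
Qed.

Lemma subtree_term a ss w k B x kx :
  has_subtree ss w k B x kx -> has_subtree (inr a :: ss) (a :: w) k B x kx.
Proof.
move=> [HB [u [z [c [-> -> R]]]]]; split=> //.
by exists (a :: u), z, c; split=> // x' kx' /R; exact: YieldsTerm.
Qed.

Lemma subtree_left A rhs ss w1 w2 k1 k2 B x kx : List.In (A, rhs) rules ->
  has_subtree rhs w1 k1 B x kx -> yields ss w2 k2 ->
  has_subtree (inl A :: ss) (w1 ++ w2) (k1 + k2).+1 B x kx.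
Proof.
move=> Hin [HB [u [z [c [-> -> R]]]]] H2; split=> //.
exists u, (z ++ w2), (c + k2).+1; split; [by rewrite -!catA | lia |].
by move=> x' kx' /R H; apply: yields_eq (YieldsRule Hin H H2) _ _; [rewrite -!catA | lia].
Qed.

Lemma subtree_right A rhs ss w1 w2 k1 k2 B x kx : List.In (A, rhs) rules ->
  yields rhs w1 k1 -> has_subtree ss w2 k2 B x kx ->
  has_subtree (inl A :: ss) (w1 ++ w2) (k1 + k2).+1 B x kx.
Proof.
move=> Hin H1 [HB [u [z [c [-> -> R]]]]]; split=> //.
exists (w1 ++ u), z, (k1 + c).+1; split; [by rewrite -!catA | lia |].
by move=> x' kx' /R H; apply: yields_eq (YieldsRule Hin H1 H) _ _; [rewrite -!catA | lia].
Qed.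

Lemma subtree_top A rhs w k B x kx : List.In (A, rhs) rules ->
  has_subtree rhs w k B x kx -> has_subtree [:: inl A] w k.+1 B x kx.
Proof. by move=> Hin /(subtree_left Hin)/(_ (YieldsNil G)); rewrite cats0 addn0. Qed.

Lemma subtree_trans ss w k A x kx B y ky : has_subtree ss w k A x kx ->
  has_subtree [:: inl A] x kx B y ky -> has_subtree ss w k B y ky.
Proof.
move=> [HA [u1 [z1 [c1 [-> -> R1]]]]] [HB [u2 [z2 [c2 [-> -> R2]]]]]; split=> //.
exists (u1 ++ u2), (z2 ++ z1), (c1 + c2); split; [by rewrite -!catA | lia |].
by move=> y' ky' /R2/R1 H; apply: yields_eq H _ _; [rewrite -!catA | lia].
Qed.

Lemma subtree_size ss w k A x kx : has_subtree ss w k A x kx -> size x <= size w.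
Proof. by move=> [_ [u [z [c [-> _ _]]]]]; rewrite !size_cat; lia. Qed.

Lemma pump_subtree A X kX y ky : has_subtree [:: inl A] X kX A y ky ->
  exists v y' c, X = v ++ y ++ y' /\ forall i,
    yields [:: inl A] (flatten (nseq i v) ++ y ++ flatten (nseq i y')) (c * i + ky).
Proof.
move=> [Hy [v [y' [c [-> _ R]]]]]; exists v, y', c; split=> // i.
elim: i => [|i IHi]; first by rewrite /= muln0 cats0.
apply: yields_eq (R _ _ IHi) _ _; last lia.
have -> : flatten (nseq i.+1 y') = flatten (nseq i y') ++ y'.
  by rewrite -addn1 nseqD flatten_cat /= cats0.
by rewrite /= -!catA.
Qed.

End Subtrees.

Section Pumping.
Variables (T : Type) (G : cfg T).
Local Notation rules := (cfg_rules G).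
Local Notation yields := (yields G).

Variable b : nat.
Hypothesis rhs_bound : forall A rhs, List.In (A, rhs) rules -> size rhs <= b.

(* A long derivation has a subtree whose yield lies in the range (B, b * B]:
   descend until the yield drops to at most B; the last step shrinks the
   yield by a factor of at most b. *)
Lemma subtree_in_range B ss w k : 0 < B -> yields ss w k ->
  size w <= size ss * B \/
  exists A x kx, has_subtree G ss w k A x kx /\ B < size x <= b * B.
Proof.
move=> B_gt0; elim=> [|a ss0 w0 k0 _ IH|A rhs ss0 w1 w2 k1 k2 Hin H1 IH1 H2 IH2].
- by left.
- case: IH => [H|[A [x [kx [HS Hs]]]]]; first by left => /=; rewrite mulSn; lia.
  by right; exists A, x, kx; split=> //; exact: subtree_term.
- case: IH1 => [HL1|[C [x [kx [HS Hs]]]]]; last first.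
    by right; exists C, x, kx; split=> //; exact: subtree_left Hin HS H2.
  case: IH2 => [HL2|[C [x [kx [HS Hs]]]]]; last first.
    by right; exists C, x, kx; split=> //; exact: subtree_right Hin H1 HS.
  case: (ltnP B (size w1)) => HB; last by left; rewrite size_cat /= mulSn; lia.
  right; exists A, w1, k1.+1; split; first exact: subtree_root Hin H1 H2.
  rewrite HB /=; apply: leq_trans HL1 _; rewrite leq_mul2r (rhs_bound Hin); lia.
Qed.

Definition nonterminals := undup (map fst rules).
Definition unseen (S : seq nat) := size [seq n <- nonterminals | n \notin S].

Lemma mem_nonterminals A rhs : List.In (A, rhs) rules -> A \in nonterminals.
Proof.
rewrite /nonterminals mem_undup; elim: rules => [//|[A' r'] l IH] /= [[-> _]|H].
  by rewrite inE eqxx.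
by rewrite inE IH ?orbT.
Qed.

Lemma unseen_cons A S :
  A \in nonterminals -> A \notin S -> unseen S = (unseen (A :: S)).+1.
Proof.
move=> HA HS; rewrite /unseen.
have U : uniq [seq n <- nonterminals | n \notin S] by rewrite filter_uniq // undup_uniq.
have M : A \in [seq n <- nonterminals | n \notin S] by rewrite mem_filter HS.
have := size_rem M; rewrite rem_filter // -filter_predI.
rewrite (@eq_filter _ _ (fun n => n \notin A :: S)) => [->|n /=]; last by rewrite inE negb_or.
by case: [seq n <- nonterminals | n \notin S] M.
Qed.

Definition repeats ss w k := exists A x kx y ky,
  [/\ has_subtree G ss w k A x kx, has_subtree G [:: inl A] x kx A y ky & ky < kx].

Hypothesis b_gt0 : 0 < b.

(* Pigeonhole along a path: if the yield exceeds [size ss * b ^ unseen S], some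
   path visits more distinct nonterminals than are available outside [S], so
   either a nonterminal repeats or one from [S] occurs. *)
Lemma repeats_or_seen ss w k : yields ss w k -> forall S,
  size ss * b ^ unseen S < size w ->
  repeats ss w k \/ exists B x kx, B \in S /\ has_subtree G ss w k B x kx.
Proof.
elim=> [//|a ss0 w0 k0 _ IH|A rhs ss0 w1 w2 k1 k2 Hin H1 IH1 H2 IH2] S /=.
- rewrite mulSn => Hs; have Hp : 0 < b ^ unseen S by rewrite expn_gt0 b_gt0.
  case: (IH S ltac:(lia)) => [[C [x [kx [y [ky [HS HS2 Hl]]]]]]|[B [x [kx [HBS HS]]]]].
    by left; exists C, x, kx, y, ky; split=> //; exact: subtree_term.
  by right; exists B, x, kx; split=> //; exact: subtree_term.
rewrite mulSn size_cat => Hs.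
case: (ltnP (size ss0 * b ^ unseen S) (size w2)) => Hw2.
  case: (IH2 S Hw2) => [[C [x [kx [y [ky [HS HS2 Hl]]]]]]|[B [x [kx [HBS HS]]]]].
    by left; exists C, x, kx, y, ky; split=> //; exact: subtree_right Hin H1 HS.
  by right; exists B, x, kx; split=> //; exact: subtree_right Hin H1 HS.
case: (boolP (A \in S)) => HAS.
  by right; exists A, w1, k1.+1; split=> //; exact: subtree_root Hin H1 H2.
have Hw1 : size rhs * b ^ unseen (A :: S) < size w1.
  apply: leq_ltn_trans (_ : b ^ unseen S < _); last by lia.
  by rewrite (unseen_cons (mem_nonterminals Hin) HAS) expnS leq_mul2r (rhs_bound Hin) orbT.
case: (IH1 _ Hw1) => [[C [x [kx [y [ky [HS HS2 Hl]]]]]]|[B [x [kx]]]].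
  by left; exists C, x, kx, y, ky; split=> //; exact: subtree_left Hin HS H2.
rewrite inE => -[/orP [/eqP -> HS|HBS HS]]; last first.
  by right; exists B, x, kx; split=> //; exact: subtree_left Hin HS H2.
left; exists A, w1, k1.+1, x, kx; split; first exact: subtree_root Hin H1 H2.
  exact: subtree_top Hin HS.
by case: HS => _ [u [z [c [_ -> _]]]]; lia.
Qed.

End Pumping.

Definition pump (T : Type) (u v x y z : seq T) (i : nat) : seq T :=
  u ++ flatten (nseq i v) ++ x ++ flatten (nseq i y) ++ z.

Definition rhs_max (T : Type) (l : seq (nat * seq (nat + T))) : nat :=
  (foldr maxn 0 [seq size r.2 | r <- l]).+1.

Lemma rhs_max_bound (T : Type) (l : seq (nat * seq (nat + T))) A rhs :
  List.In (A, rhs) l -> size rhs <= rhs_max l.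
Proof.
rewrite /rhs_max; elim: l => [//|[A' r'] l IH] /= [[_ ->]|/IH]; first exact/leqW/leq_maxl.
by move/leq_trans; apply; rewrite ltnS leq_maxr.
Qed.

(* With [b] bounding the rule
   lengths and [N] the number of nonterminals, take p = b ^ N.+1; a minimal
   derivation of a word longer than p has a subtree of yield in (b^N, p], and
   inside it a repeated nonterminal.  If the pumped pieces were both empty,
   removing the repetition would give a smaller derivation. *)
Theorem pumping_lemma (T : Type) (L : language T) : context_free L ->
  exists p, forall w, L w -> p < size w ->
  exists u v x y z, [/\ w = u ++ v ++ x ++ y ++ z, 0 < size (v ++ y),
    size (v ++ x ++ y) <= p & forall i, L (pump u v x y z i)].
Proof.
move=> [G HG]; set b := rhs_max (cfg_rules G); set N := size (nonterminals G).
have Hb A rhs : List.In (A, rhs) (cfg_rules G) -> size rhs <= b by exact: rhs_max_bound.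
have b_gt0 : 0 < b by [].
exists (b ^ N.+1) => w /HG /cfg_lang_yields [k Hk] Hp.
elim/ltn_ind: k Hk => k IH Hk.
have bN_gt0 : 0 < b ^ N by rewrite expn_gt0 b_gt0.
case: (subtree_in_range Hb bN_gt0 Hk) => [|[A0 [w0 [k0 [HS0 /andP [Hlo Hhi]]]]]].
  by rewrite mul1n => Hs; move: Hp; rewrite ltnNge expnS (leq_trans Hs (leq_pmull _ b_gt0)).
have unseen0 : unseen G [::] = N.
  by rewrite /unseen (@eq_filter _ _ predT) ?filter_predT.
have [|[A [X [kX [y [ky [HSa HSb ky_lt]]]]]]|[? [? [? [//]]]]] :=
  repeats_or_seen Hb b_gt0 HS0.1 (S := [::]).
  by rewrite unseen0 mul1n.
have [_ [u [z [c0 [Ew Ek R0]]]]] := subtree_trans HS0 HSa.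
have [v [y' [c1 [EX pumpA]]]] := pump_subtree HSb.
case: (posnP (size (v ++ y'))) => Hvy; last first.
  exists u, v, y, y', z; split=> [||| i]; first by rewrite Ew EX -!catA.
  - exact: Hvy.
  - by rewrite -EX (leq_trans (subtree_size HSa)) // expnS.
  - by apply/HG/cfg_lang_yields; have := R0 _ _ (pumpA i); rewrite -!catA; exists (c0 + (c1 * i + ky)).
move: Hvy EX; rewrite size_cat => /eqP; rewrite addn_eq0 => /andP [/eqP/size0nil -> /eqP/size0nil ->].
rewrite /= cats0 => EX; subst X.
by apply: (IH (c0 + ky)); [lia | rewrite Ew; apply: R0; case: HSb].
Qed.

Section TwoBlocks.
Variables (T : Type) (G : cfg T) (N : nat) (a c : T) (i j : nat).
Hypothesis rules_N : forall rhs, List.In (N, rhs) (cfg_rules G) <->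
  rhs = map inr (nseq i a) ++ inl N :: map inr (nseq j c) \/
  rhs = map inr (nseq i a ++ nseq j c).

Lemma blocks_succ n :
  nseq i a ++ (nseq (i * n) a ++ nseq (j * n) c) ++ nseq j c =
  nseq (i * n.+1) a ++ nseq (j * n.+1) c.
Proof. by rewrite [i * n.+1]mulnS [j * n.+1]mulnSr !nseqD -!catA. Qed.

Lemma two_blocks_inv w k : yields G [:: inl N] w k ->
  exists2 n, 0 < n & w = nseq (i * n) a ++ nseq (j * n) c.
Proof.
elim/ltn_ind: k w => k IH w /yields_single_inv [rhs [k' [Ek /rules_N [] -> H]]]; subst k.
- have [w' -> /(yields_cat G [:: inl N])] := yields_prefix_inv H.
  move=> [w1 [w2 [k1 [k2 [-> Ek /(IH k1 ltac:(lia)) [n n_gt0 ->] /yields_terminals_inv ->]]]]].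
  by exists n.+1; rewrite // blocks_succ.
- by exists 1; rewrite // (yields_terminals_inv H) !muln1.
Qed.

Lemma two_blocks n : 0 < n -> exists k, yields G [:: inl N] (nseq (i * n) a ++ nseq (j * n) c) k.
Proof.
case: n => [//|n] _; elim: n => [|n [k Hk]].
  exists 1; apply: yields_single (proj2 (rules_N _) (or_intror erefl)) _.
  by rewrite !muln1; apply: yields_terminals.
exists k.+1; apply: yields_single (proj2 (rules_N _) (or_introl erefl)) _.
rewrite -blocks_succ -[k]add0n; apply: yields_app; first exact: yields_terminals.
by rewrite -[k]addn0 -(cat1s (inl N)); apply: yields_app Hk (yields_terminals _ _).
Qed.

End TwoBlocks.

(* The grammar  S -> A B,  A -> 0 A 1 | 0 1,  B -> 22 B 3333 | 22 3333. *)
Definition G14 : cfg nat := CFG 0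
  [:: (0, [:: inl 1; inl 2]);
      (1, [:: inr 0; inl 1; inr 1]);
      (1, [:: inr 0; inr 1]);
      (2, [:: inr 2; inr 2; inl 2; inr 3; inr 3; inr 3; inr 3]);
      (2, [:: inr 2; inr 2; inr 3; inr 3; inr 3; inr 3])].

Lemma G14_rules0 rhs : List.In (0, rhs) (cfg_rules G14) <-> rhs = [:: inl 1; inl 2].
Proof. by split=> /= H; intuition congruence. Qed.

Lemma G14_rules1 rhs : List.In (1, rhs) (cfg_rules G14) <->
  rhs = map inr (nseq 1 0) ++ inl 1 :: map inr (nseq 1 1) \/
  rhs = map inr (nseq 1 0 ++ nseq 1 1).
Proof. by split=> /= H; intuition congruence. Qed.

Lemma G14_rules2 rhs : List.In (2, rhs) (cfg_rules G14) <->
  rhs = map inr (nseq 2 2) ++ inl 2 :: map inr (nseq 4 3) \/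
  rhs = map inr (nseq 2 2 ++ nseq 4 3).
Proof. by split=> /= H; intuition congruence. Qed.

Lemma L14_context_free : context_free L14.
Proof.
exists G14 => w; rewrite cfg_lang_yields; split.
- move=> [m [n [m_gt0 [n_gt0 ->]]]].
  have [k1 H1] := two_blocks G14_rules1 m_gt0.
  have [k2 H2] := two_blocks G14_rules2 n_gt0.
  exists (k1 + k2).+1; apply: yields_single (proj2 (G14_rules0 _) erefl) _.
  rewrite !mul1n in H1; rewrite catA.
  exact: (yields_app (s1 := [:: inl 1]) (s2 := [:: inl 2]) H1 H2).
- move=> [k /yields_single_inv [rhs [k' [_ /G14_rules0 -> /(yields_cat _ [:: inl 1])]]]].
  move=> [w1 [w2 [k1 [k2 [-> _ /(two_blocks_inv G14_rules1) [m m_gt0 ->]]]]]].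
  move=> /(two_blocks_inv G14_rules2) [n n_gt0 ->].
  by exists m, n; rewrite !mul1n -catA.
Qed.

Lemma perm_sh (T : eqType) (x y : seq T) : perm_eq (sh x y) (x ++ y).
Proof.
elim: x y => [|a x IH] [|c y] //=; first by rewrite cats0.
rewrite perm_cons (perm_trans (_ : perm_eq _ (c :: x ++ y))) ?perm_cons //.
by rewrite perm_sym -(cat1s c y) perm_catCA.
Qed.

Lemma count_bdi (T : eqType) (a : pred T) w : count a (bdi w) = count a w.
Proof. by rewrite /bdi (permP (perm_sh _ _)) /fh /lh cat_take_drop. Qed.

Lemma nth_bdi1 (T : Type) (d : T) w : 1 < size w -> nth d (bdi w) 1 = nth d w (size w)./2.
Proof.
move=> Hw; rewrite /bdi /fh /lh -[(size w)./2 in RHS]addn0 -nth_drop.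
have : 0 < size (take (size w)./2 w) by rewrite size_take; case: ifP; lia.
have : 0 < size (drop (size w)./2 w) by rewrite size_drop; lia.
by case: drop => [|c y] //; case: take.
Qed.

Lemma count_wpow (T : Type) (a : pred T) s k : count a (wpow s k) = k * count a s.
Proof. by elim: k => [//|k IH]; rewrite /wpow /= count_cat -/(wpow s k) IH mulSn. Qed.

Lemma size_wpow (T : Type) (s : seq T) k : size (wpow s k) = k * size s.
Proof. by elim: k => [//|k IH]; rewrite /wpow /= size_cat -/(wpow s k) IH mulSn. Qed.

Lemma nth_wpow2 (T : Type) (d a c : T) n i : nth d (wpow [:: a; c] n) i =
  if i < 2 * n then (if odd i then c else a) else d.
Proof.
elim: n i => [|n IH] [|[|i]] //=; first by rewrite ifT //; lia.
rewrite -/(wpow _ n) IH negbK.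
by have -> : (i.+2 < 2 * n.+1) = (i < 2 * n) by lia.
Qed.

Lemma sh_nseq (T : Type) (a c : T) k x y :
  sh (nseq k a ++ x) (nseq k c ++ y) = wpow [:: a; c] k ++ sh x y.
Proof. by elim: k => [//|k IH] /=; rewrite IH. Qed.

Definition lword (m n : nat) : seq nat :=
  nseq m 0 ++ nseq m 1 ++ nseq (2 * n) 2 ++ nseq (4 * n) 3.

Definition kword (n : nat) : seq nat :=
  wpow [:: 0; 3] n ++ wpow [:: 1; 3] n ++ wpow [:: 2; 3] (2 * n).

Lemma bdi_lword n : bdi (lword n n) = kword n.
Proof.
have Hs : size (lword n n) = (4 * n).*2 by rewrite !size_cat !size_nseq -addnn; lia.
have Hs1 : size (nseq n 0 ++ nseq n 1 ++ nseq (2 * n) 2) = 4 * n.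
  by rewrite !size_cat !size_nseq; lia.
rewrite /bdi /fh /lh Hs doubleK.
have -> : lword n n = (nseq n 0 ++ nseq n 1 ++ nseq (2 * n) 2) ++ nseq (4 * n) 3.
  by rewrite /lword !catA.
rewrite -{1}Hs1 take_size_cat // -{2}Hs1 drop_size_cat //.
rewrite Hs1 (_ : 4 * n = n + (n + 2 * n)); last by lia.
rewrite (nseqD n) (nseqD n (2 * n)) !sh_nseq -[nseq (2 * n) 2]cats0 -[nseq (2 * n) 3]cats0.
by rewrite sh_nseq cats0.
Qed.

Lemma kword_in_bdi n : 0 < n -> bdi_lang L14 (kword n).
Proof. by move=> n_gt0; exists (lword n n); split; [exists n, n | rewrite bdi_lword]. Qed.

Lemma nth_lword_not3 m n i : i < 2 * m + 2 * n -> nth 0 (lword m n) i != 3.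
Proof.
by move=> Hi; rewrite /lword !nth_cat !size_nseq !nth_nseq; do !case: ifP => //; lia.
Qed.

(* The invariants of bdi(L) refuted by pumping: the letter counts of
   0^m 1^m 2^(2n) 3^(4n) survive shuffling, and when n < m the middle of the
   word, which becomes the second letter, is a 1 or a 2. *)
Lemma bdi_L14_inv w : bdi_lang L14 w ->
  [/\ count (pred1 0) w = count (pred1 1) w,
      count (pred1 3) w = 2 * count (pred1 2) w &
      count (pred1 2) w < 2 * count (pred1 0) w -> nth 0 w 1 != 3].
Proof.
move=> [v [[m [n [_ [_ ->]]]] ->]]; rewrite !count_bdi /lword !count_cat !count_nseq /=.
split; [lia | lia | rewrite !addn0 !mul1n => Hnm].
have Hs : size (lword m n) = (m + 3 * n).*2 by rewrite !size_cat !size_nseq -addnn; lia.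
by rewrite nth_bdi1 Hs ?doubleK ?nth_lword_not3 //; lia.
Qed.

Lemma bdi_L14_R14 w : bdi_lang L14 w /\ R14 w <-> K14 w.
Proof.
split.
- move=> [/bdi_L14_inv [C01 C32 _] [a [b [c [a_gt0 [_ [_ Ew]]]]]]].
  move: C01 C32; rewrite Ew !count_cat !count_wpow /= => C01 C32.
  have [-> ->] : b = a /\ c = 2 * a by lia.
  by exists a.
- move=> [n [n_gt0 ->]]; split; first exact: kword_in_bdi.
  by exists n, n, (2 * n); do 3 (split; first lia).
Qed.

Lemma count_pump (T : Type) (a : pred T) u v x y z i :
  count a (pump u v x y z i) = count a (u ++ x ++ z) + i * count a (v ++ y).
Proof.
rewrite /pump !count_cat (count_wpow a v i) (count_wpow a y i); lia.
Qed.

Lemma pump1 (T : Type) (u v x y z : seq T) : pump u v x y z 1 = u ++ v ++ x ++ y ++ z.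
Proof. by rewrite /pump /= !cats0. Qed.

Lemma nth_window (T : eqType) (d e : T) u v x y z : e \in v ++ y ->
  exists2 i, i < size (v ++ x ++ y) & nth d (u ++ v ++ x ++ y ++ z) (size u + i) = e.
Proof.
have nth_shift s t j : nth d (s ++ t) (size s + j) = nth d t j.
  by rewrite -nth_drop drop_size_cat.
rewrite mem_cat => /orP [ev|ey].
  exists (index e v); first by rewrite !size_cat; have := index_mem e v; rewrite ev; lia.
  by rewrite nth_shift nth_cat index_mem ev nth_index.
exists (size v + size x + index e y); first by rewrite !size_cat; have := index_mem e y; rewrite ey; lia.
by rewrite -!addnA !nth_shift nth_cat index_mem ey nth_index.
Qed.

Lemma kword_letter q i : i < 8 * q ->
  [/\ nth 0 (kword q) i <= 3, nth 0 (kword q) i = 0 -> i < 2 * q,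
      nth 0 (kword q) i = 1 -> 2 * q <= i & nth 0 (kword q) i = 2 -> 4 * q <= i].
Proof.
move=> Hi; rewrite /kword nth_cat size_wpow /= nth_wpow2.
case: (ltnP i (q * 2)) => H1; first by rewrite ifT; [case: odd; split=> //; lia | lia].
rewrite nth_cat size_wpow /= nth_wpow2.
case: (ltnP (i - q * 2) (q * 2)) => H2; first by rewrite ifT; [case: odd; split=> //; lia | lia].
by rewrite nth_wpow2 ifT; [case: odd; split=> //; lia | lia].
Qed.

Lemma kword_window q u v x y z e : kword q = u ++ v ++ x ++ y ++ z -> e \in v ++ y ->
  exists i, [/\ size u <= i < size u + size (v ++ x ++ y), e <= 3,
    e = 0 -> i < 2 * q, e = 1 -> 2 * q <= i & e = 2 -> 4 * q <= i].
Proof.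
move=> Ez /(nth_window 0 u x z) [j j_lt <-].
have {}j_lt : j < size (v ++ x ++ y) := j_lt.
have Hi : size u + j < 8 * q.
  have := congr1 size Ez; rewrite !size_cat !size_wpow /= in j_lt *; lia.
have [] := kword_letter Hi; rewrite -Ez => e_le e0 e1 e2.
by exists (size u + j); split=> //; lia.
Qed.

(* Pump z = (03)^q (13)^q (23)^(2q) with q > p, writing c_j and d_j for the
   number of letters j outside and inside the pumped pieces.  The counts of
   bdi(L) force d_0 = d_1 and d_3 = 2 d_2, so a 1 or a 2 is pumped and the
   window lies past the first two letters; then the second letter stays 3,
   which forces d_2 = 2 d_0.  But a window shorter than 2q cannot contain
   both a 0 and a 2, so nothing is pumped at all. *)
Lemma bdi_L14_not_context_free : ~ context_free (bdi_lang L14).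
Proof.
move=> /pumping_lemma [p Hp]; have [q q_gt] : exists q, p.+1 < q by exists p.+2.
have [|u [v [x [y [z [Ez vy_gt0 win_le pumped]]]]]] := Hp _ (kword_in_bdi (ltn_trans (ltn0Sn _) q_gt)).
  by rewrite !size_cat !size_wpow /=; lia.
pose c (j : nat) := count (pred1 j) (u ++ x ++ z).
pose d (j : nat) := count (pred1 j) (v ++ y).
have inv i : [/\ c 0 + i * d 0 = c 1 + i * d 1, c 3 + i * d 3 = 2 * (c 2 + i * d 2) &
    c 2 + i * d 2 < 2 * (c 0 + i * d 0) -> nth 0 (pump u v x y z i) 1 != 3].
  by have := bdi_L14_inv (pumped i); rewrite !count_pump.
have window e : 0 < d e -> exists i, [/\ size u <= i < size u + p, e <= 3,
    e = 0 -> i < 2 * q, e = 1 -> 2 * q <= i & e = 2 -> 4 * q <= i].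
  rewrite /d -has_count has_pred1 => /(kword_window Ez) [i [wi e_le e0 e1 e2]].
  by exists i; split=> //; lia.
have [B01 B32 _] := inv 0; have [B01' B32' _] := inv 2.
have no02 : d 0 = 0 \/ d 2 = 0.
  case: (posnP (d 0)) => [|/window [i0 [w0 _ /(_ erefl) i0_lt _ _]]]; first by left.
  case: (posnP (d 2)) => [|/window [i2 [w2 _ _ _ /(_ erefl) i2_ge]]]; [by right | lia].
have [d12|d12] := posnP (d 1 + d 2).
  have [e e_in] : exists e, e \in v ++ y.
    by case: (v ++ y) vy_gt0 => // e s _; exists e; rewrite inE eqxx.
  have de : 0 < d e by rewrite /d -has_count has_pred1.
  have [i [_ e_le _ _ _]] := window e de.
  by move: de; case: e e_le {e_in} => [|[|[|[|e]]]] e_le de; lia.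
have u_gt1 : 1 < size u.
  case: (posnP (d 1)) => [d1|/window [i [wi _ _ /(_ erefl) i_ge _]]]; last lia.
  have : 0 < d 2 by lia.
  by move=> /window [i [wi _ _ _ /(_ erefl) i_ge]]; lia.
have second3 i : nth 0 (pump u v x y z i) 1 = 3.
  have kw1 : nth 0 (kword q) 1 = 3.
    by rewrite nth_cat size_wpow nth_wpow2 /= !ifT //; lia.
  by rewrite /pump nth_cat u_gt1 -kw1 Ez nth_cat u_gt1.
have balanced i : 2 * (c 0 + i * d 0) <= c 2 + i * d 2.
  by have [_ _ Ni] := inv i; rewrite leqNgt; apply/negP => /Ni; rewrite second3.
have kw : c 2 + d 2 = 2 * (c 0 + d 0).
  have : count (pred1 2) (kword q) = 2 * count (pred1 0) (kword q).
    by rewrite !count_cat !count_wpow /=; lia.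
  by rewrite Ez -pump1 !count_pump !mul1n.
have := balanced 0; have := balanced 2; lia.
Qed.

Theorem mainTheorem14 :
  context_free L14 /\
  (forall w, (bdi_lang L14 w /\ R14 w) <-> K14 w) /\
  ~ context_free (bdi_lang L14).
Proof.
split; first exact: L14_context_free.
split; first exact: bdi_L14_R14.
exact: bdi_L14_not_context_free.
Qed.
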